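(* Let $\alpha,\beta,\gamma,x$ be real numbers and $\lambda$ a nonnegative integer. For all nonnegative integers $n$, $$A_{n}^{\lambda,x}(\alpha,\beta,\gamma)=(-1)^{n}\sum_{k=0}^{n}\binom{k+\lambda-1}{k}(-\beta)^{k}k!\,S(n,k,\alpha,\beta,\beta\lambda-\gamma)\,(x+1)^{k}.$$
   Context: For a number $t$ and $\alpha$, the generalised factorial is $(t|\alpha)_n=\prod_{j=0}^{n-1}(t-j\alpha)$ for $n\ge 1$ and $(t|\alpha)_0=1$. For parameters $\alpha,\beta,\gamma$, the generalised Stirling numbers $S(n,k,\alpha,\beta,\gamma)$ ($0\le k\le n$) are defined by the polynomial identity $(t|\alpha)_n=\sum_{k=0}^{n}S(n,k,\alpha,\beta,\gamma)\,(t-\gamma|\beta)_k$ in the variable $t$. For a nonnegative integer $\lambda$ put $\binom{k+\lambda-1}{k}=\lambda(\lambda+1)\cdots(\lambda+k-1)/k!$ (equal to $1$ for $k=0$). Define $$A^{\lambda,x}_n(\alpha,\beta,\gamma)=\sum_{k=0}^{n}\binom{k+\lambda-1}{k}(-1)^{n+k}\beta^k k!\,S(n,k,\alpha,-\beta,-\gamma)\,x^k .$$ *)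

From HB Require Import structures.
From mathcomp Require Import all_boot all_order all_algebra.
From mathcomp Require Import reals.
Set Implicit Arguments. Unset Strict Implicit. Unset Printing Implicit Defensive.
Import Order.TTheory GRing.Theory Num.Theory.
Local Open Scope ring_scope.

Definition gfact (R : comNzRingType) (t : {poly R}) (a : R) (n : nat) : {poly R} :=
  \prod_(j < n) (t - (j%:R * a)%:P).

(* S is the family of generalised Stirling numbers: for all parameters a b c
   and all n, (t|a)_n = sum_{k=0}^n S n k a b c (t - c | b)_k as polynomials in t. *)
Definition gen_stirling (R : comNzRingType) (S : nat -> nat -> R -> R -> R -> R) : Prop :=
  forall (n : nat) (a b c : R),
    gfact 'X a n = \sum_(k < n.+1) S n k a b c *: gfact ('X - c%:P) b k.

(* binom(k + lam - 1, k) := lam (lam+1) ... (lam+k-1) / k! *)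
Definition risebin (R : fieldType) (lam k : nat) : R :=
  (\prod_(i < k) (lam + i)%:R) / (k`!)%:R.

Definition Apoly (R : fieldType) (S : nat -> nat -> R -> R -> R -> R)
  (lam : nat) (x : R) (n : nat) (a b c : R) : R :=
  \sum_(k < n.+1) risebin R lam k * (-1) ^+ (n + k) * b ^+ k * (k`!)%:R
                  * S n k a (- b) (- c) * x ^+ k.

From HB Require Import structures.
From mathcomp Require Import all_boot all_order all_algebra.
From mathcomp Require Import reals.
From mathcomp Require Import ring zify.
Set Implicit Arguments. Unset Strict Implicit. Unset Printing Implicit Defensive.
Import Order.TTheory GRing.Theory Num.Theory.
Local Open Scope ring_scope.

(* Put u = t + γ. Reversing the order of its factors, (u - βλ | β)_k equals
   (u - β(λ+k-1) | -β)_k, and the Vandermonde convolution for generalised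
   factorials expands it in the monic basis (u | -β)_j with coefficients
   C(k,j) (λ+k-1)^_(k-j) (-β)^(k-j).  Comparing coordinates of (t|α)_n in this
   basis writes S(n,j,α,-β,-γ) as a combination of the S(n,k,α,β,βλ-γ).
   Substituted into A_n, and since (λ+k-1)^_(k-j) λ^(j) = λ^(k) for the rising
   factorial λ^(k) = λ(λ+1)...(λ+k-1), the inner sum over j collapses by the
   binomial theorem to λ^(k) (-β)^k (x+1)^k. *)

Lemma big_ord_widen_zero (V : nmodType) m n (F : nat -> V) :
  (m <= n)%N -> (forall j, (m <= j)%N -> F j = 0) ->
  \sum_(j < m) F j = \sum_(j < n) F j.
Proof.
move=> le_mn F0; rewrite (big_ord_widen n F le_mn) big_mkcond.
by apply: eq_bigr => j _; case: ltnP => // /F0 ->.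
Qed.

Arguments big_ord_widen_zero {V m} n F.

Section GeneralisedFactorial.
Variable A : comNzRingType.
Implicit Types (z w h : A) (k : nat).

Definition gfactr z h k : A := \prod_(i < k) (z - i%:R * h).

Lemma gfactrS z h k : gfactr z h k.+1 = gfactr z h k * (z - k%:R * h).
Proof. by rewrite /gfactr big_ord_recr. Qed.

Lemma gfactrD z w h k :
  gfactr (z + w) h k = \sum_(j < k.+1) 'C(k, j)%:R * gfactr z h j * gfactr w h (k - j).
Proof.
elim: k => [|k IHk]; first by rewrite big_ord1 /gfactr !big_ord0 !mulr1.
have split_term (j : 'I_k.+1) :
    'C(k, j)%:R * gfactr z h j * gfactr w h (k - j) * (z + w - k%:R * h)
  = 'C(k, j)%:R * gfactr z h j.+1 * gfactr w h (k - j)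
    + 'C(k, j)%:R * gfactr z h j * gfactr w h (k.+1 - j).
  have le_jk : (j <= k)%N by rewrite -ltnS.
  by rewrite subSn // !gfactrS natrB //; ring.
rewrite gfactrS IHk big_distrl (eq_bigr _ (fun j _ => split_term j)) big_split /=.
rewrite [RHS]big_ord_recl /=; under [in RHS]eq_bigr do rewrite binS natrD !mulrDl.
rewrite big_split /= addrA addrC; congr (_ + _).
rewrite big_ord_recl big_ord_recr /= (bin_small (ltnSn k)) !mul0r addr0 !bin0.
by congr (_ + _); apply: eq_bigr => j _; rewrite /bump /= add1n subSS.
Qed.

Lemma gfactr_rev z h k : gfactr z h k = gfactr (z - k.-1%:R * h) (- h) k.
Proof.
rewrite /gfactr -(big_mkord xpredT (fun i => z - i%:R * h)) big_rev_mkord subn0.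
apply: eq_bigr => i _; have lt_ik := ltn_ord i.
have -> : (k - i.+1 = k.-1 - i)%N by lia.
by rewrite natrB; [ring | lia].
Qed.

Lemma gfactr_natmul n h k : gfactr (n%:R * h) h k = (n ^_ k)%:R * h ^+ k.
Proof.
elim: k => [|k IHk]; first by rewrite /gfactr big_ord0 mul1r.
rewrite gfactrS IHk ffactnSr; case: (ltnP n k) => [/ffact_small-> | le_kn].
  by rewrite !mul0n !mul0r.
by rewrite natrM natrB // exprSr; ring.
Qed.

Definition shift_coef lam h k j : A :=
  ('C(k, j) * (lam + k.-1) ^_ (k - j))%:R * h ^+ (k - j).

Lemma shift_coef_small lam h k j : (k < j)%N -> shift_coef lam h k j = 0.
Proof. by move=> lt_kj; rewrite /shift_coef bin_small ?mul0r. Qed.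

Lemma gfactr_shift u h lam k :
  gfactr (u - lam%:R * h) h k
  = \sum_(j < k.+1) shift_coef lam (- h) k j * gfactr u (- h) j.
Proof.
rewrite gfactr_rev (_ : _ - _ - _ = u + (lam + k.-1)%:R * - h); last by rewrite natrD; ring.
by rewrite gfactrD; apply: eq_bigr => j _; rewrite gfactr_natmul /shift_coef natrM; ring.
Qed.

End GeneralisedFactorial.

Definition rfact m k := (\prod_(i < k) (m + i))%N.

Lemma rfactD m j l : rfact m (j + l) = (rfact m j * rfact (m + j) l)%N.
Proof.
by rewrite /rfact big_split_ord; congr (_ * _); apply: eq_bigr => i _; rewrite addnA.
Qed.

Lemma rfact_ffact m l : rfact m l = (m + l).-1 ^_ l.
Proof.
elim: l => [|l IHl]; first by rewrite /rfact big_ord0.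
by rewrite /rfact big_ord_recr -/(rfact m l) IHl addnS ffactnS mulnC.
Qed.

Lemma ffact_mul_rfact lam j k : (j <= k)%N ->
  ((lam + k.-1) ^_ (k - j) * rfact lam j)%N = rfact lam k.
Proof.
case: k => [|k]; first by case: j => // _; rewrite subnn ffactn0 mul1n.
move=> le_jk; rewrite -{3}(subnKC le_jk) rfactD mulnC.
by rewrite (rfact_ffact (lam + j)) -addnA subnKC // addnS.
Qed.

Lemma sum_shift_coef_rfact (A : comNzRingType) (y x : A) lam k :
  \sum_(j < k.+1) shift_coef lam y k j * ((rfact lam j)%:R * y ^+ j * x ^+ j)
  = (rfact lam k)%:R * y ^+ k * (x + 1) ^+ k.
Proof.
rewrite addrC exprDn big_distrr; apply: eq_bigr => j _.
have le_jk : (j <= k)%N by rewrite -ltnS.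
have yk : y ^+ k = y ^+ (k - j) * y ^+ j by rewrite -exprD subnK.
by rewrite /= /shift_coef -(ffact_mul_rfact lam le_jk) yk expr1n mul1r -mulr_natr !natrM; ring.
Qed.

Lemma gfactE (R : comNzRingType) (t : {poly R}) a n : gfact t a n = gfactr t a%:P n.
Proof. by apply: eq_bigr => i _; rewrite polyCM polyC_natr. Qed.

Lemma gfact_XsubC (R : comNzRingType) (c a : R) j :
  gfact ('X - c%:P) a j = \prod_(i < j) ('X - (c + i%:R * a)%:P).
Proof. by apply: eq_bigr => i _; rewrite polyCD opprD addrA. Qed.

Lemma gfact_XsubC_monic (R : comNzRingType) (c a : R) j : gfact ('X - c%:P) a j \is monic.
Proof. by rewrite gfact_XsubC monic_prod_XsubC. Qed.

Lemma size_gfact_XsubC (R : comNzRingType) (c a : R) j : size (gfact ('X - c%:P) a j) = j.+1.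
Proof. by rewrite gfact_XsubC size_prod_XsubC -[index_enum _]enumT size_enum_ord. Qed.

Lemma gfact_shift (R : comNzRingType) (b c : R) lam k n : (k <= n)%N ->
  gfact ('X - (b * lam%:R - c)%:P) b k
  = \sum_(j < n.+1) shift_coef lam (- b) k j *: gfact ('X - (- c)%:P) (- b) j.
Proof.
move=> le_kn; rewrite gfactE (_ : 'X - _ = 'X + c%:P - lam%:R * b%:P); last first.
  by rewrite polyCB polyCM polyC_natr; ring.
rewrite gfactr_shift (big_ord_widen_zero n.+1
  (fun j => shift_coef lam (- b%:P) k j * gfactr ('X + c%:P) (- b%:P) j)) //; last first.
  by move=> j /shift_coef_small->; rewrite mul0r.
apply: eq_bigr => j _; rewrite gfactE !polyCN opprK -mul_polyC /shift_coef.
by rewrite polyCM polyC_natr polyC_exp polyCN.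
Qed.

Lemma monic_basis_coord_uniq (R : nzRingType) (P : nat -> {poly R}) :
  (forall j, P j \is monic) -> (forall j, size (P j) = j.+1) ->
  forall N (u v : nat -> R), \sum_(j < N) u j *: P j = \sum_(j < N) v j *: P j ->
  forall j, (j < N)%N -> u j = v j.
Proof.
move=> monP szP; elim=> [//|N IHN] u v; rewrite !big_ord_recr /=.
have top (w : nat -> R) : (\sum_(j < N) w j *: P j + w N *: P N)`_N = w N.
  have PN1 : (P N)`_N = 1 by move: (monicP (monP N)); rewrite lead_coefE szP.
  rewrite coefD coefZ PN1 mulr1 coef_sum big1 ?add0r // => j _.
  by rewrite coefZ nth_default ?mulr0 // szP.
move=> E; have uvN : u N = v N by rewrite -top E top.
move: E; rewrite uvN => /addIr E j; rewrite ltnS leq_eqVlt => /predU1P[-> // | ltjN].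
exact: IHN.
Qed.

Lemma risebin_fact (R : numFieldType) lam k : risebin R lam k * k`!%:R = (rfact lam k)%:R.
Proof. by rewrite /risebin divfK ?pnatr_eq0 -?lt0n ?fact_gt0 // /rfact natr_prod. Qed.

Lemma gen_stirling_shift (R : comNzRingType) (S : nat -> nat -> R -> R -> R -> R)
    (hS : gen_stirling S) (a b c : R) lam n j : (j < n.+1)%N ->
  S n j a (- b) (- c)
  = \sum_(k < n.+1) S n k a b (b * lam%:R - c) * shift_coef lam (- b) k j.
Proof.
apply: (monic_basis_coord_uniq (gfact_XsubC_monic (- c) (- b))
         (size_gfact_XsubC (- c) (- b)) (u := fun j => S n j a (- b) (- c))
         (v := fun j =>
           \sum_(k < n.+1) S n k a b (b * lam%:R - c) * shift_coef lam (- b) k j)).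
rewrite -hS (hS n a b (b * lam%:R - c)).
under eq_bigr => k _ do rewrite (gfact_shift b c lam (leq_ord k)) scaler_sumr.
rewrite exchange_big; apply: eq_bigr => i _; rewrite scaler_suml.
by apply: eq_bigr => k _; rewrite scalerA.
Qed.

Theorem theorem11 (R : realType) (S : nat -> nat -> R -> R -> R -> R)
  (hS : gen_stirling S) (a b c x : R) (lam : nat) :
  forall n : nat,
    Apoly S lam x n a b c =
    (-1) ^+ n * \sum_(k < n.+1) risebin R lam k * (- b) ^+ k * (k`!)%:R
                  * S n k a b (b * lam%:R - c) * (x + 1) ^+ k.
Proof.
move=> n; pose w j := (rfact lam j)%:R * (- b) ^+ j * x ^+ j.
transitivity ((-1) ^+ n * \sum_(j < n.+1) S n j a (- b) (- c) * w j).
  rewrite /Apoly big_distrr; apply: eq_bigr => j _.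
  by rewrite /= /w -risebin_fact exprD (exprNn b); ring.
congr (_ * _).
under eq_bigr => j _ do rewrite (gen_stirling_shift hS a b c lam (ltn_ord j)) big_distrl.
rewrite exchange_big; apply: eq_bigr => k _ /=.
transitivity (S n k a b (b * lam%:R - c) *
                \sum_(j < k.+1) shift_coef lam (- b) k j * w j); last first.
  by rewrite sum_shift_coef_rfact -risebin_fact; ring.
rewrite (big_ord_widen_zero n.+1 (fun j => shift_coef lam (- b) k j * w j)).
- by rewrite big_distrr; apply: eq_bigr => j _; rewrite /= -mulrA.
- exact: ltn_ord.
- by move=> j /shift_coef_small->; rewrite mul0r.
Qed.
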